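(* Let $f,g\in R=A[t;\sigma,\delta]$ with $g$ not a zero divisor in $R$ and $Rf+Rg=R$. Suppose there is $m\in R$ with $Rm=Rf\cap Rg$, and let $f',g'\in R$ satisfy $m=f'g=g'f$. Let $T$ be any $(\sigma,\delta)$-pseudo-linear transformation on a left $A$-module $V$. Then: (a) $R/Rf'\cong R/Rf$ as left $R$-modules (via $h+Rf'\mapsto hg+Rf$); (b) $g(T)(\ker f(T))=\ker f'(T)$; (c) $\ker m(T)=\ker f(T)\oplus\ker g(T)$.
   Context: $A$ is a ring with $1$, $\sigma$ a unital ring endomorphism, $\delta$ a $\sigma$-derivation ($\delta$ additive, $\delta(ab)=\sigma(a)\delta(b)+\delta(a)b$); $R=A[t;\sigma,\delta]$ is the Ore extension with $ta=\sigma(a)t+\delta(a)$. A $(\sigma,\delta)$-pseudo-linear transformation on a left $A$-module $V$ is an additive $T:V\to V$ with $T(\alpha v)=\sigma(\alpha)T(v)+\delta(\alpha)v$; for $h=\sum a_it^i\in R$, $h(T)(v)=\sum a_iT^i(v)$. *)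

From HB Require Import structures.
From mathcomp Require Import all_boot all_order all_algebra.
Set Implicit Arguments. Unset Strict Implicit. Unset Printing Implicit Defensive.
Import GRing.Theory.
Local Open Scope ring_scope.

Definition is_sigma_derivation (A : nzRingType) (sigma : A -> A) (delta : A -> A) :=
  (forall a b, delta (a + b) = delta a + delta b) /\
  (forall a b, delta (a * b) = sigma a * delta b + delta a * b).

Definition ore_phi (A : nzRingType) (R : nzRingType) (iota : A -> R) (t : R)
  (p : {poly A}) : R :=
  \sum_(i < size p) iota p`_i * t ^+ i.

(* R is the Ore extension A[t; sigma, delta]: R contains A (via the injective
   unital ring morphism iota), R is a free left A-module with basis 1, t, t^2, ...
   (i.e. ore_phi is a bijection from coefficient polynomials onto R), and
   t a = sigma(a) t + delta(a). *)
Definition is_ore_extension (A : nzRingType) (sigma delta : A -> A)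
  (R : nzRingType) (iota : {rmorphism A -> R}) (t : R) :=
  [/\ injective iota,
      bijective (ore_phi iota t) &
      forall a : A, t * iota a = iota (sigma a) * t + iota (delta a)].

Definition pseudo_linear (A : nzRingType) (sigma delta : A -> A)
  (V : lmodType A) (T : V -> V) :=
  (forall u v, T (u + v) = T u + T v) /\
  (forall (a : A) (v : V), T (a *: v) = sigma a *: T v + delta a *: v).

(* h(T)(v) = sum_i a_i T^i(v), for h = sum_i a_i t^i with coefficients p *)
Definition op_eval (A : nzRingType) (V : lmodType A) (T : V -> V)
  (p : {poly A}) (v : V) : V :=
  \sum_(i < size p) p`_i *: iter i T v.

Definition in_left_ideal (R : nzRingType) (x y : R) := exists r : R, y = r * x.

From Stdlib Require Import Setoid.
From HB Require Import structures.
From mathcomp Require Import all_boot all_order all_algebra.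
Set Implicit Arguments. Unset Strict Implicit. Unset Printing Implicit Defensive.
Import GRing.Theory.
Local Open Scope ring_scope.

(* 1. A pseudo-linear map T makes V a left module over the Ore extension
      R = A[t; sigma, delta], with h acting as h(T).  Both the element
      sum_i p_i t^i of R and the operator sum_i p_i T^i are "coefficient
      sums" of the list p, and multiplication by t on the left (resp.
      application of T) acts on coefficient sums by the same shift
      p |-> coefficients of t p.  Transporting op_eval along the bijection
      p |-> sum_i p_i t^i therefore yields a ring action of R on V.

   2. Pure ring theory: if Rf + Rg = R, Rf cap Rg is contained in Rm and
      m = f'g = g'f with g right-cancellable, then hg lies in Rf iff h lies
      in Rf'; this gives (a), and a Bezout relation 1 = af + bg gives the
      kernel statements (b) and (c) for an arbitrary ring action. *)

(* The coefficients of t * q in R, for q given by its coefficient list: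
   t (sum_i q_i t^i) = sum_i (sigma q_(i-1) + delta q_i) t^i. *)
Definition shift_poly (A : nzRingType) (sigma delta : A -> A) (q : {poly A})
  : {poly A} :=
  \poly_(i < (size q).+1) ((if i is j.+1 then sigma q`_j else 0) + delta q`_i).

Section CoefficientSums.

Variables (A : nzRingType) (M : zmodType) (F : nat -> A -> M).
Hypothesis F_add : forall i x y, F i (x + y) = F i x + F i y.

(* sum_i F i p_i: both ore_phi and op_eval are of this shape. *)
Definition coef_sum (p : {poly A}) : M := \sum_(i < size p) F i p`_i.

Lemma F_zero i : F i 0 = 0.
Proof. by apply: (@addrI _ (F i 0)); rewrite -F_add !addr0. Qed.

Lemma coef_sum_widen (p : {poly A}) (n : nat) :
  (size p <= n)%N -> coef_sum p = \sum_(i < n) F i p`_i.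
Proof.
move=> le_pn; rewrite /coef_sum (big_ord_widen n (fun i => F i p`_i) le_pn).
rewrite big_mkcond; apply: eq_bigr => i _.
by case: ltnP => // le_pi; rewrite nth_default // F_zero.
Qed.

Lemma coef_sum1 : coef_sum 1 = F 0 1.
Proof. by rewrite /coef_sum size_poly1 big_ord1 coefC. Qed.

Lemma coef_sumD (p q : {poly A}) : coef_sum (p + q) = coef_sum p + coef_sum q.
Proof.
set n := maxn (size p) (size q).
rewrite (@coef_sum_widen (p + q) n) ?size_polyD //.
rewrite (@coef_sum_widen p n) ?leq_maxl // (@coef_sum_widen q n) ?leq_maxr //.
by rewrite -big_split; apply: eq_bigr => i _; rewrite coefD F_add.
Qed.

Lemma coef_sumZ (a : A) (L : M -> M) :
  {morph L : x y / x + y} -> (forall i x, F i (a * x) = L (F i x)) ->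
  forall p, coef_sum (a *: p) = L (coef_sum p).
Proof.
move=> L_add FZ p; have L0 : L 0 = 0.
  by apply: (@addrI _ (L 0)); rewrite -L_add !addr0.
rewrite (@coef_sum_widen _ (size p)) ?size_scale_leq // /coef_sum.
by rewrite (big_morph L L_add L0); apply: eq_bigr => i _; rewrite coefZ FZ.
Qed.

Lemma coef_sum_shift (sigma delta : A -> A) (S : M -> M) :
  delta 0 = 0 -> {morph S : x y / x + y} ->
  (forall i x, S (F i x) = F i.+1 (sigma x) + F i (delta x)) ->
  forall q, S (coef_sum q) = coef_sum (shift_poly sigma delta q).
Proof.
move=> delta0 S_add S_F q; have S0 : S 0 = 0.
  by apply: (@addrI _ (S 0)); rewrite -S_add !addr0.
rewrite (@coef_sum_widen (shift_poly sigma delta q) (size q).+1) ?size_poly //.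
under eq_bigr => i _ do rewrite coef_poly ltn_ord F_add.
rewrite big_split /= big_ord_recl big_ord_recr /= F_zero add0r.
rewrite nth_default // delta0 F_zero addr0.
by rewrite /coef_sum (big_morph S S_add S0) -big_split; apply: eq_bigr.
Qed.

End CoefficientSums.

Definition is_ring_action (R : nzRingType) (V : zmodType) (act : R -> V -> V) :=
  [/\ forall r s v, act (r + s) v = act r v + act s v,
      forall r s v, act (r * s) v = act r (act s v),
      forall v, act 1 v = v &
      forall r u w, act r (u + w) = act r u + act r w].

Section OreAction.

Variables (A : nzRingType) (sigma delta : A -> A).
Hypothesis delta_add : forall a b, delta (a + b) = delta a + delta b.
Variables (R : nzRingType) (iota : {rmorphism A -> R}) (t : R).
Hypothesis t_comm : forall a, t * iota a = iota (sigma a) * t + iota (delta a).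
Variables (V : lmodType A) (T : V -> V).
Hypothesis T_pseudo : pseudo_linear sigma delta T.

Let delta0 : delta 0 = 0.
Proof. by apply: (@addrI _ (delta 0)); rewrite -delta_add !addr0. Qed.

Let phi_term i (x : A) : R := iota x * t ^+ i.
Let eval_term (v : V) i (x : A) : V := x *: iter i T v.

Let phi_term_add i x y : phi_term i (x + y) = phi_term i x + phi_term i y.
Proof. by rewrite /phi_term rmorphD mulrDl. Qed.

Let eval_term_add v i x y : eval_term v i (x + y) = eval_term v i x + eval_term v i y.
Proof. by rewrite /eval_term scalerDl. Qed.

Lemma ore_phiD p q : ore_phi iota t (p + q) = ore_phi iota t p + ore_phi iota t q.
Proof. exact: (coef_sumD phi_term_add). Qed.

Lemma ore_phiZ a p : ore_phi iota t (a *: p) = iota a * ore_phi iota t p.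
Proof.
apply: (coef_sumZ phi_term_add) => // [x y|i x]; first by rewrite mulrDr.
by rewrite /phi_term rmorphM mulrA.
Qed.

Lemma ore_phi1 : ore_phi iota t 1 = 1.
Proof. by rewrite [LHS](@coef_sum1 _ _ phi_term) // /phi_term rmorph1 mulr1. Qed.

Lemma ore_phi_shift q :
  t * ore_phi iota t q = ore_phi iota t (shift_poly sigma delta q).
Proof.
apply: (coef_sum_shift phi_term_add) => // [x y|i x]; first by rewrite mulrDr.
by rewrite /phi_term mulrA t_comm mulrDl -mulrA -exprS.
Qed.

Lemma op_evalD p q v : op_eval T (p + q) v = op_eval T p v + op_eval T q v.
Proof. exact: (coef_sumD (eval_term_add v)). Qed.

Lemma op_evalZ a p v : op_eval T (a *: p) v = a *: op_eval T p v.
Proof.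
apply: (coef_sumZ (eval_term_add v)) => // [x y|i x]; first by rewrite scalerDr.
by rewrite /eval_term scalerA.
Qed.

Lemma op_eval1 v : op_eval T 1 v = v.
Proof. by rewrite [LHS](@coef_sum1 _ _ (eval_term v)) // /eval_term scale1r. Qed.

Lemma op_eval_shift q v : T (op_eval T q v) = op_eval T (shift_poly sigma delta q) v.
Proof.
case: T_pseudo => T_add T_scale.
by apply: (coef_sum_shift (eval_term_add v)) => // i x; rewrite /eval_term T_scale.
Qed.

Lemma op_eval_addv p u w : op_eval T p (u + w) = op_eval T p u + op_eval T p w.
Proof.
have iter_add i : iter i T (u + w) = iter i T u + iter i T w.
  by elim: i => //= i ->; rewrite T_pseudo.1.
by rewrite /op_eval -big_split; apply: eq_bigr => i _; rewrite iter_add scalerDr.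
Qed.

Hypothesis ore_basis : bijective (ore_phi iota t).

Lemma ore_action : exists act : R -> V -> V,
  is_ring_action act /\ forall p v, act (ore_phi iota t p) v = op_eval T p v.
Proof.
case: ore_basis => psi phiK psiK.
pose act r v := op_eval T (psi r) v.
have act_phi p v : act (ore_phi iota t p) v = op_eval T p v by rewrite /act phiK.
have actD r s v : act (r + s) v = act r v + act s v.
  by rewrite -(psiK r) -(psiK s) -ore_phiD !act_phi op_evalD.
have act0 v : act 0 v = 0.
  by apply: (@addrI _ (act 0 v)); rewrite -actD !addr0.
have act_iota a s v : act (iota a * s) v = a *: act s v.
  by rewrite -(psiK s) -ore_phiZ !act_phi op_evalZ.
have act_tn i s v : act (t ^+ i * s) v = iter i T (act s v).
  elim: i => [|i IH]; first by rewrite mul1r.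
  by rewrite exprS -mulrA /= -IH -(psiK (_ * s)) ore_phi_shift !act_phi op_eval_shift.
exists act; split=> //; split=> // [r s v|v|r u w].
- rewrite -(psiK r) act_phi {1}/ore_phi mulr_suml.
  rewrite (big_morph (act^~ v) (fun r s => actD r s v) (act0 v)).
  by apply: eq_bigr => i _; rewrite -mulrA act_iota act_tn.
- by rewrite -ore_phi1 act_phi op_eval1.
- exact: op_eval_addv.
Qed.

End OreAction.

Section ActionKernels.

Variables (R : nzRingType) (V : zmodType) (act : R -> V -> V).
Hypothesis act_ring : is_ring_action act.

Lemma act_v0 r : act r 0 = 0.
Proof.
case: act_ring => _ _ _ act_addv.
by apply: (@addrI _ (act r 0)); rewrite -act_addv !addr0.
Qed.

Lemma act_ideal_ker x y v : in_left_ideal x y -> act x v = 0 -> act y v = 0.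
Proof.
case=> r ->; case: act_ring => _ act_mul _ _.
by rewrite act_mul => ->; apply: act_v0.
Qed.

End ActionKernels.

Section Comaximal.

Variables (R : nzRingType) (F G M F' G' : R).
Hypothesis G_rcancel : forall r, r * G = 0 -> r = 0.
Hypothesis comaximal : forall r, exists a b, r = a * F + b * G.
Hypothesis common_multiple :
  forall r, in_left_ideal F r -> in_left_ideal G r -> in_left_ideal M r.
Hypothesis M_F'G : M = F' * G.
Hypothesis M_G'F : M = G' * F.

Lemma ideal_F'_iff h : in_left_ideal F' h <-> in_left_ideal F (h * G).
Proof.
split=> [[r ->]|hG_F]; first by exists (r * G'); rewrite -mulrA -M_F'G M_G'F mulrA.
have [s hs] := common_multiple hG_F (ex_intro _ h erefl).
exists s; apply/eqP; rewrite -subr_eq0; apply/eqP/G_rcancel.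
by rewrite mulrBl hs M_F'G mulrA subrr.
Qed.

(* (a): h + Rf' |-> hg + Rf is injective and onto R/Rf. *)
Lemma quotient_map_inj h1 h2 :
  in_left_ideal F' (h1 - h2) <-> in_left_ideal F (h1 * G - h2 * G).
Proof. by rewrite -mulrBl; apply: ideal_F'_iff. Qed.

Lemma quotient_map_onto k : exists h, in_left_ideal F (k - h * G).
Proof. by have [a [b ->]] := comaximal k; exists b, a; rewrite addrK. Qed.

Variables (V : zmodType) (act : R -> V -> V).
Hypothesis act_ring : is_ring_action act.

Lemma image_ker_F w :
  (exists v, act F v = 0 /\ act G v = w) <-> act F' w = 0.
Proof.
have [actD act_mul act1 _] := act_ring.
split=> [[v [Fv <-]]|F'w].
  by rewrite -act_mul -M_F'G M_G'F act_mul Fv (act_v0 act_ring).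
have [a [b bezout]] := comaximal 1.
have bG : b * G = 1 - a * F by rewrite bezout addrAC subrr add0r.
have Fb_F' : in_left_ideal F' (F * b).
  apply/ideal_F'_iff; exists (1 - F * a).
  by rewrite -mulrA bG mulrBr mulr1 mulrBl mul1r mulrA.
have Gb1_F' : in_left_ideal F' (G * b - 1).
  apply/ideal_F'_iff; exists (- (G * a)).
  by rewrite mulrBl -mulrA bG mulrBr mulr1 mul1r addrAC subrr add0r mulNr mulrA.
exists (act b w); split; first by rewrite -act_mul (act_ideal_ker act_ring Fb_F').
rewrite -act_mul -[G * b](subrK 1) actD act1.
by rewrite (act_ideal_ker act_ring Gb1_F') // add0r.
Qed.

Lemma ker_M_sum v : act M v = 0 <->
  exists v1 v2, [/\ act F v1 = 0, act G v2 = 0 & v = v1 + v2].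
Proof.
have [actD act_mul act1 act_addv] := act_ring.
split=> [Mv|[v1 [v2 [Fv1 Gv2 ->]]]]; last first.
  by rewrite act_addv {1}M_G'F M_F'G !act_mul Fv1 Gv2 !(act_v0 act_ring) addr0.
have [a [b bezout]] := comaximal 1.
have bG : b * G = 1 - a * F by rewrite bezout addrAC subrr add0r.
have aF : a * F = 1 - b * G by rewrite bezout addrK.
have FbG_M : in_left_ideal M (F * (b * G)).
  apply: common_multiple; last by exists (F * b); rewrite mulrA.
  exists (1 - F * a).
  by rewrite bG mulrBr mulr1 mulrBl mul1r mulrA.
have GaF_M : in_left_ideal M (G * (a * F)).
  apply: common_multiple; first by exists (G * a); rewrite mulrA.
  exists (1 - G * b).
  by rewrite aF mulrBr mulr1 mulrBl mul1r mulrA.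
exists (act (b * G) v), (act (a * F) v); split.
- by rewrite -act_mul (act_ideal_ker act_ring FbG_M).
- by rewrite -act_mul (act_ideal_ker act_ring GaF_M).
- by rewrite -actD addrC -bezout act1.
Qed.

Lemma ker_F_ker_G_trivial v : act F v = 0 -> act G v = 0 -> v = 0.
Proof.
have [actD act_mul act1 _] := act_ring.
have [a [b bezout]] := comaximal 1.
by move=> Fv Gv; rewrite -(act1 v) bezout actD !act_mul Fv Gv !(act_v0 act_ring) addr0.
Qed.

End Comaximal.

Theorem proposition1p16
  (A : nzRingType) (sigma : {rmorphism A -> A}) (delta : A -> A)
  (hdelta : is_sigma_derivation sigma delta)
  (R : nzRingType) (iota : {rmorphism A -> R}) (t : R)
  (hR : is_ore_extension sigma delta iota t)
  (f g m f' g' : {poly A})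
  (hg_nzd : forall r : R, (r * ore_phi iota t g = 0 -> r = 0) /\
                          (ore_phi iota t g * r = 0 -> r = 0))
  (hcomax : forall r : R, exists a b : R,
      r = a * ore_phi iota t f + b * ore_phi iota t g)
  (hlcm : forall r : R, in_left_ideal (ore_phi iota t m) r <->
      (in_left_ideal (ore_phi iota t f) r /\ in_left_ideal (ore_phi iota t g) r))
  (hf'g : ore_phi iota t m = ore_phi iota t f' * ore_phi iota t g)
  (hg'f : ore_phi iota t m = ore_phi iota t g' * ore_phi iota t f)
  (V : lmodType A) (T : V -> V) (hT : pseudo_linear sigma delta T) :
  ((forall h1 h2 : R, in_left_ideal (ore_phi iota t f') (h1 - h2) <->
        in_left_ideal (ore_phi iota t f) (h1 * ore_phi iota t g - h2 * ore_phi iota t g)) /\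
   (forall k : R, exists h : R,
        in_left_ideal (ore_phi iota t f) (k - h * ore_phi iota t g))) /\
  (forall w : V, (exists v : V, op_eval T f v = 0 /\ op_eval T g v = w) <->
        op_eval T f' w = 0) /\
  ((forall v : V, op_eval T m v = 0 <->
       exists v1 v2 : V, [/\ op_eval T f v1 = 0, op_eval T g v2 = 0 & v = v1 + v2]) /\
   (forall v : V, op_eval T f v = 0 -> op_eval T g v = 0 -> v = 0)).
Proof.
have [_ basis t_comm] := hR.
have [act [act_ring act_phi]] := ore_action hdelta.1 t_comm hT basis.
have G_rcancel r := (hg_nzd r).1.
have common r : in_left_ideal (ore_phi iota t f) r ->
    in_left_ideal (ore_phi iota t g) r -> in_left_ideal (ore_phi iota t m) r.
  by move=> hF hG; apply/hlcm.
setoid_rewrite <- act_phi.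
split; [split|split; [|split]].
- exact (quotient_map_inj G_rcancel common hf'g hg'f).
- exact (quotient_map_onto hcomax).
- exact (image_ker_F G_rcancel hcomax common hf'g hg'f act_ring).
- exact (ker_M_sum hcomax common hf'g hg'f act_ring).
- exact (ker_F_ker_G_trivial hcomax act_ring).
Qed.
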